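(* Let $n$ be sufficiently large, $\alpha\in[1,n^{0.2}]$, $B=\gamma=\alpha(\ln n)^{10}$, $\rho=(\ln n)^3$, let $L\ge 2$ be an integer and $j\in\{1,\dots,L-1\}$. Let $\zeta_1=\left(\tfrac12-B^{-(j+1)}\right)\gamma B^{2j}-\sqrt{10\gamma\ln n}\,B^{j}$ and $\zeta_3=\tfrac{\gamma B^{2j}}{2}+\tfrac{B^{j+1}}{100}$. Consider a Bernoulli arm with mean $\tfrac12-X$, where $X\sim\mu$ for some $\mu\in\mathcal{D}_j$. Pull the arm $\gamma B^{2j}$ times, obtaining outcomes $\Theta\in\{0,1\}^{\gamma B^{2j}}$ with $|\Theta|=\sum_i\Theta_i$. Then for every outcome vector $\theta$ with $|\theta|\in[\zeta_1,\zeta_3]$, the posterior distribution $\nu$ of $X$ conditioned on $\Theta=\theta$ belongs to $\mathcal{D}_{j+1}$.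
   Context: For an integer $j\ge1$ and $\eta\ge0$, $\mathcal{D}_j(\eta)$ is the class of probability distributions $\pi$ supported on $\{B^{-1},B^{-2},\dots,B^{-L}\}$ such that, for $X\sim\pi$: (i) if $j\ge2$, $\Pr[X\in\{B^{-1},\dots,B^{-(j-1)}\}]\le n^{-9}$; (ii) there is a normalization constant $\lambda>0$ (depending on $\pi$) such that for every $\ell=j,\dots,L$, $\Pr[X=B^{-\ell}]\in\left[\lambda B^{-2\ell}(1-\rho^{-\ell}\eta),\ \lambda B^{-2\ell}(1+\rho^{-\ell}\eta)\right]$. The class $\mathcal{D}_1:=\mathcal{D}_1(0)$ consists of the single distribution with $\Pr[X=B^{-\ell}]=\lambda_1B^{-2\ell}$ for $\ell=1,\dots,L$ ($\lambda_1$ the normalizer), and for $j\ge2$, $\mathcal{D}_j:=\mathcal{D}_j(\rho^j/2)$. *)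

From Stdlib Require Export Reals List.
Export ListNotations.
Open Scope R_scope.

(* sum_{l=a}^{b} f l  (empty if b < a) *)
Definition rsum (f : nat -> R) (a b : nat) : R :=
  fold_right (fun l acc => f l + acc) 0 (List.seq a (S b - a)).

(* A distribution on {B^-1,...,B^-L} is represented by the function
   l |-> Pr[X = B^-l] on indices l = 1..L (B > 1, so the points are distinct). *)
Definition is_dist (L : nat) (pi : nat -> R) : Prop :=
  (forall l, (1 <= l <= L)%nat -> 0 <= pi l) /\ rsum pi 1 L = 1.

Definition inDeta (n : nat) (B rho : R) (L j : nat) (eta : R) (pi : nat -> R) : Prop :=
  ((2 <= j)%nat -> rsum pi 1 (j - 1) <= / (INR n ^ 9)) /\
  exists lam : R, 0 < lam /\
    forall l, (j <= l <= L)%nat ->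
      lam * / B ^ (2 * l) * (1 - / rho ^ l * eta) <= pi l /\
      pi l <= lam * / B ^ (2 * l) * (1 + / rho ^ l * eta).

Definition inD (n : nat) (B rho : R) (L j : nat) (pi : nat -> R) : Prop :=
  inDeta n B rho L j (if Nat.eqb j 1 then 0 else rho ^ j / 2) pi.

Definition lnn (n : nat) : R := ln (INR n).
Definition gam (n : nat) (alpha : R) : R := alpha * lnn n ^ 10.
Definition Bpar (n : nat) (alpha : R) : R := gam n alpha.
Definition rhopar (n : nat) : R := lnn n ^ 3.

Definition zeta1 (n : nat) (alpha : R) (j : nat) : R :=
  (1/2 - / Bpar n alpha ^ (S j)) * gam n alpha * Bpar n alpha ^ (2 * j)
  - sqrt (10 * gam n alpha * lnn n) * Bpar n alpha ^ j.
Definition zeta3 (n : nat) (alpha : R) (j : nat) : R :=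
  gam n alpha * Bpar n alpha ^ (2 * j) / 2 + Bpar n alpha ^ (S j) / 100.

Definition ones (theta : list bool) : nat := length (filter (fun b : bool => b) theta).

Definition lik (x : R) (theta : list bool) : R :=
  fold_right (fun (b : bool) acc => (if b then 1/2 - x else 1/2 + x) * acc) 1 theta.

Definition posterior (L : nat) (B : R) (mu : nat -> R) (theta : list bool) (l : nat) : R :=
  mu l * lik (/ B ^ l) theta / rsum (fun k => mu k * lik (/ B ^ k) theta) 1 L.

(* Write k = |theta|, P = B^j and m = gamma B^{2j} = B P^2.  For X = B^{-l} the
   likelihood of theta is 2^{-m} (1-u)^k (1+u)^{m-k} with u = 2 B^{-l}; the factor
   2^{-m} cancels, so the posterior is the Bayes update of the prior mu by the
   weights w_l = (1-u)^k (1+u)^{m-k}.  When k lies in the window [zeta1, zeta3],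
   i.e. m/2 - P(1+s) <= k <= m/2 + BP/100 with s = sqrt(10 B ln n):
   - deep levels l >= j+1 have w_l = 1 +- B^{-(l-j-1)}/20 (Bernoulli's inequality
     and 1+y <= e^y), so the shape lam B^{-2l}(1 +- eta rho^{-l}) survives with
     relative error rho^{j+1-l}/2 and normalization lam / W;
   - shallow levels l <= j have w_l <= exp(-B/2), while the prior puts mass at
     least 1/(6B^2) on the deep levels, so the shallow posterior mass is <= n^{-9}. *)

From Stdlib Require Import Lra Lia.

Lemma rsum_le (f g : nat -> R) (a b : nat) :
  (forall l, (a <= l <= b)%nat -> f l <= g l) -> rsum f a b <= rsum g a b.
Proof.
  intros Hfg; unfold rsum.
  assert (Hin : forall l, In l (List.seq a (S b - a)) -> f l <= g l)
    by (intros l Hl; apply in_seq in Hl; apply Hfg; lia).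
  revert Hin; generalize (List.seq a (S b - a)) as s.
  induction s as [|x s IH]; simpl; intros Hin; [lra|].
  assert (f x <= g x) by auto.
  assert (IHs := IH (fun l Hl => Hin l (or_intror Hl))); lra.
Qed.

Lemma rsum_ext (f g : nat -> R) (a b : nat) :
  (forall l, (a <= l <= b)%nat -> f l = g l) -> rsum f a b = rsum g a b.
Proof.
  intros Hfg; apply Rle_antisym; apply rsum_le;
    intros l Hl; rewrite (Hfg l Hl); lra.
Qed.

Lemma rsum_scale (f : nat -> R) (c : R) (a b : nat) :
  rsum (fun l => f l * c) a b = rsum f a b * c.
Proof.
  unfold rsum; generalize (List.seq a (S b - a)) as s.
  induction s as [|x s IH]; simpl; [lra | rewrite IH; ring].
Qed.

Lemma rsum_nonneg (f : nat -> R) (a b : nat) :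
  (forall l, (a <= l <= b)%nat -> 0 <= f l) -> 0 <= rsum f a b.
Proof.
  intros Hf; replace 0 with (rsum f a b * 0) at 1 by ring.
  rewrite <- rsum_scale; apply rsum_le; intros l Hl; rewrite Rmult_0_r; auto.
Qed.

Lemma rsum_split (f : nat -> R) (a j b : nat) :
  (a <= S j)%nat -> (j <= b)%nat -> rsum f a b = rsum f a j + rsum f (S j) b.
Proof.
  intros Haj Hjb; unfold rsum.
  replace (S b - a)%nat with ((S j - a) + (S b - S j))%nat by lia.
  rewrite seq_app; replace (a + (S j - a))%nat with (S j) by lia.
  generalize (List.seq a (S j - a)) as s.
  induction s as [|x s IH]; cbn [app fold_right]; [lra | rewrite IH; ring].
Qed.

Lemma rsum_single (f : nat -> R) (a : nat) : rsum f a a = f a.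
Proof. unfold rsum; replace (S a - a)%nat with 1%nat by lia; simpl; ring. Qed.

Lemma pow_le_exp (y : R) (N : nat) : 0 <= 1 + y -> (1 + y) ^ N <= exp (INR N * y).
Proof.
  intros Hy; induction N as [|N IH].
  - simpl; rewrite Rmult_0_l, exp_0; lra.
  - rewrite S_INR; replace ((INR N + 1) * y) with (y + INR N * y) by ring.
    rewrite exp_plus; simpl; apply Rmult_le_compat; auto.
    + apply pow_le; auto.
    + apply exp_ineq1_le.
Qed.

Lemma bernoulli_ineq (v : R) (N : nat) : 0 <= v <= 1 -> 1 - INR N * v <= (1 - v) ^ N.
Proof.
  intros Hv; induction N as [|N IH]; [simpl; lra|].
  rewrite S_INR; simpl.
  assert (0 <= INR N) by apply pos_INR.
  assert ((1 - v) * (1 - INR N * v) <= (1 - v) * (1 - v) ^ N)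
    by (apply Rmult_le_compat_l; lra).
  nra.
Qed.

Lemma pow_le_one (x : R) (N : nat) : 0 <= x <= 1 -> x ^ N <= 1.
Proof.
  intros Hx; induction N as [|N IH]; simpl; [lra|].
  assert (0 <= x ^ N) by (apply pow_le; lra); nra.
Qed.

Lemma exp_le_lin (t : R) : 0 <= t <= 1/2 -> exp t <= 1 + 2 * t.
Proof.
  intros Ht; assert (H1 := exp_ineq1_le (- t)); rewrite exp_Ropp in H1.
  assert (H2 := exp_pos t).
  assert (exp t * (1 - t) <= 1).
  { apply Rmult_le_reg_r with (/ exp t); [apply Rinv_0_lt_compat; lra|].
    replace (exp t * (1 - t) * / exp t) with (1 - t) by (field; lra); lra. }
  nra.
Qed.

Lemma exp_mono (x y : R) : x <= y -> exp x <= exp y.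
Proof. intros [H|H]; [left; apply exp_increasing; auto | subst; lra]. Qed.

Lemma exp_nat_mult (N : nat) (x : R) : exp (INR N * x) = exp x ^ N.
Proof.
  rewrite <- Rpower_pow by apply exp_pos; unfold Rpower; rewrite ln_exp; reflexivity.
Qed.

Lemma exp_ge_cube (y : R) : 0 <= y -> (y / 3) ^ 3 <= exp y.
Proof.
  intros Hy; replace y with (INR 3 * (y / 3)) at 2 by (simpl; field).
  rewrite exp_nat_mult; apply pow_incr.
  assert (H := exp_ineq1_le (y / 3)); lra.
Qed.

Lemma exp_half_dominates (x B : R) :
  0 < x -> 20000 <= B -> 36 * ln x <= B -> 8 * B ^ 2 * x ^ 9 <= exp (B / 2).
Proof.
  intros Hx HB Hln.
  replace (B / 2) with (B / 4 + B / 4) by field; rewrite exp_plus.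
  assert (Hcube : (B / 4 / 3) ^ 3 <= exp (B / 4)) by (apply exp_ge_cube; lra).
  assert (Hpow : x ^ 9 <= exp (B / 4)).
  { rewrite <- (exp_ln x) by lra; rewrite <- exp_nat_mult.
    apply exp_mono; simpl INR; lra. }
  assert (Hquad : 8 * B ^ 2 <= (B / 4 / 3) ^ 3) by nra.
  apply Rmult_le_compat; auto; try lra.
  - nra.
  - apply pow_le; lra.
Qed.

(** The likelihood.  [nlik k m u] is 2^m times the probability of a fixed
    outcome vector with k ones out of m pulls of an arm of mean (1-u)/2. *)

Definition nlik (k m : nat) (u : R) : R := (1 - u) ^ k * (1 + u) ^ (m - k).

Lemma ones_le_length (t : list bool) : (ones t <= length t)%nat.
Proof. unfold ones; apply filter_length_le. Qed.

Lemma lik_nlik (x : R) (t : list bool) :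
  lik x t = (/ 2) ^ length t * nlik (ones t) (length t) (2 * x).
Proof.
  unfold nlik; induction t as [|b t IH]; [simpl; unfold ones; simpl; ring|].
  assert (Ho := ones_le_length t).
  destruct b.
  - change (lik x (true :: t)) with ((1/2 - x) * lik x t); rewrite IH.
    change (ones (true :: t)) with (S (ones t)).
    change (length (true :: t)) with (S (length t)).
    rewrite Nat.sub_succ; simpl; field.
  - change (lik x (false :: t)) with ((1/2 + x) * lik x t); rewrite IH.
    change (ones (false :: t)) with (ones t).
    change (length (false :: t)) with (S (length t)).
    rewrite (Nat.sub_succ_l _ _ Ho); simpl; field.
Qed.

Lemma nlik_nonneg (k m : nat) (u : R) : 0 <= u <= 1 -> 0 <= nlik k m u.
Proof. intros; unfold nlik; apply Rmult_le_pos; apply pow_le; lra. Qed.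

(* Pairing each factor (1-u) with a factor (1+u) leaves (1-u^2)^min times the
   surplus factor, on either side of the balanced count m = 2k. *)
Lemma nlik_few_ones (k m : nat) (u : R) : (2 * k <= m)%nat ->
  nlik k m u = (1 - u * u) ^ k * (1 + u) ^ (m - 2 * k).
Proof.
  intros H; unfold nlik; replace (m - k)%nat with (k + (m - 2 * k))%nat by lia.
  rewrite pow_add; replace (1 - u * u) with ((1 - u) * (1 + u)) by ring.
  rewrite Rpow_mult_distr; ring.
Qed.

Lemma nlik_many_ones (k m : nat) (u : R) : (m <= 2 * k)%nat -> (k <= m)%nat ->
  nlik k m u = (1 - u * u) ^ (m - k) * (1 - u) ^ (2 * k - m).
Proof.
  intros H H'; unfold nlik; replace k with ((m - k) + (2 * k - m))%nat at 1 by lia.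
  rewrite pow_add; replace (1 - u * u) with ((1 - u) * (1 + u)) by ring.
  rewrite Rpow_mult_distr; ring.
Qed.

(* Upper bound: at least K pairs each contribute exp(-u^2), the surplus of
   at most D extra factors (1+u) contributes exp(D u). *)
Lemma nlik_upper (k m : nat) (u K D : R) : 0 <= u <= 1 -> (k <= m)%nat ->
  K <= INR k -> K <= INR m - INR k -> 0 <= K ->
  INR m - 2 * INR k <= D -> 0 <= D ->
  nlik k m u <= exp (- K * (u * u) + D * u).
Proof.
  intros Hu Hkm HK1 HK2 HK0 HD1 HD0.
  assert (Huu : 0 <= u * u <= 1) by nra.
  assert (Hpair : forall N, (1 - u * u) ^ N <= exp (INR N * - (u * u))).
  { intros N; replace (1 - u * u) with (1 + - (u * u)) by ring; apply pow_le_exp; lra. }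
  destruct (Compare_dec.le_lt_dec (2 * k) m) as [H|H].
  - rewrite nlik_few_ones by auto.
    assert (E : (1 + u) ^ (m - 2 * k) <= exp (INR (m - 2 * k) * u))
      by (apply pow_le_exp; lra).
    rewrite minus_INR, mult_INR in E by lia; simpl INR in E.
    eapply Rle_trans; [apply Rmult_le_compat; [apply pow_le; lra | apply pow_le; lra
                                                | apply Hpair | apply E]|].
    rewrite <- exp_plus; apply exp_mono; nra.
  - rewrite nlik_many_ones by lia.
    assert (E : (1 - u) ^ (2 * k - m) <= 1) by (apply pow_le_one; lra).
    eapply Rle_trans; [apply Rmult_le_compat; [apply pow_le; lra | apply pow_le; lra
                                                | apply Hpair | apply E]|].
    rewrite Rmult_1_r, minus_INR by lia; apply exp_mono; nra.
Qed.

(* Lower bound by Bernoulli's inequality, with at most E surplus factors (1-u). *)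
Lemma nlik_lower (k m : nat) (u E : R) : 0 <= u <= 1 -> (k <= m)%nat ->
  2 * INR k - INR m <= E -> 0 <= E ->
  1 - INR m * (u * u) - E * u <= nlik k m u.
Proof.
  intros Hu Hkm HE1 HE0.
  assert (Huu : 0 <= u * u <= 1) by nra.
  assert (Hk : 0 <= INR k <= INR m) by (split; [apply pos_INR | apply le_INR; lia]).
  destruct (Compare_dec.le_lt_dec (2 * k) m) as [H|H].
  - rewrite nlik_few_ones by auto.
    assert (E1 := bernoulli_ineq (u * u) k Huu).
    assert (E2 : 1 <= (1 + u) ^ (m - 2 * k)) by (apply pow_R1_Rle; lra).
    assert (0 <= (1 - u * u) ^ k) by (apply pow_le; lra).
    nra.
  - rewrite nlik_many_ones by lia.
    assert (E1 := bernoulli_ineq (u * u) (m - k) Huu).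
    assert (E2 := bernoulli_ineq u (2 * k - m) Hu).
    rewrite minus_INR in E1 by lia; rewrite minus_INR, mult_INR in E2 by lia.
    simpl INR in E2.
    assert (0 <= (1 - u * u) ^ (m - k) <= 1) by (split; [apply pow_le | apply pow_le_one]; lra).
    assert (0 <= (1 - u) ^ (2 * k - m) <= 1) by (split; [apply pow_le | apply pow_le_one]; lra).
    set (A := (1 - u * u) ^ (m - k)) in *; set (C := (1 - u) ^ (2 * k - m)) in *.
    assert (A * C >= (1 - (INR m - INR k) * (u * u)) * C) by nra.
    assert (0 <= (INR m - INR k) * (u * u)) by nra.
    assert ((1 - (INR m - INR k) * (u * u)) * C >= C - (INR m - INR k) * (u * u)) by nra.
    nra.
Qed.

Section WeightEstimates.

Variables (k m : nat) (B P s : R).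
Hypothesis k_le_m : (k <= m)%nat.
Hypothesis B_ge : 800 <= B.
Hypothesis s_small : 400 * (1 + s) <= B.
Hypothesis s_nonneg : 0 <= s.
Hypothesis P_ge1 : 1 <= P.
Hypothesis m_eq : INR m = B * P * P.
Hypothesis k_low : INR m / 2 - P * (1 + s) <= INR k.
Hypothesis k_high : INR k <= INR m / 2 + B * P / 100.

Lemma nlik_near_one (q : R) : 1 <= q ->
  1 - / q / 20 <= nlik k m (2 * / (B * P * q)) <= 1 + / q / 20.
Proof.
  intros Hq.
  set (iB := / B); set (V := / q).
  assert (HiB : 0 < iB) by (apply Rinv_0_lt_compat; lra).
  assert (HV : 0 < V) by (apply Rinv_0_lt_compat; lra).
  assert (HV1 : V <= 1) by (unfold V; rewrite <- Rinv_1; apply Rinv_le_contravar; lra).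
  assert (HiB2 : iB <= 1 / 800)
    by (unfold iB; apply Rle_trans with (/ 800); [apply Rinv_le_contravar | ]; lra).
  assert (Hs' : (1 + s) * iB <= 1 / 400).
  { apply Rmult_le_reg_r with B; [lra|].
    replace ((1 + s) * iB * B) with (1 + s) by (unfold iB; field; lra); lra. }
  set (u := 2 * / (B * P * q)).
  assert (Hu : u = 2 * iB * V * / P) by (unfold u, iB, V; field; repeat split; lra).
  assert (HiP : 0 < / P <= 1)
    by (split; [apply Rinv_0_lt_compat | rewrite <- Rinv_1; apply Rinv_le_contravar]; lra).
  assert (Hu0 : 0 <= u <= 1).
  { rewrite Hu; split; [apply Rmult_le_pos; [|lra]; apply Rmult_le_pos; nra|].
    assert (iB * V * / P <= 1 / 800) by (assert (V * / P <= 1) by nra; nra); nra. }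
  split.
  - assert (Low := nlik_lower k m u (B * P / 50) Hu0 k_le_m ltac:(lra) ltac:(nra)).
    assert (E1 : INR m * (u * u) = 4 * iB * V * V)
      by (rewrite m_eq, Hu; unfold iB, V; field; repeat split; lra).
    assert (E2 : B * P / 50 * u = V / 25)
      by (rewrite Hu; unfold iB, V; field; repeat split; lra).
    rewrite E1, E2 in Low.
    assert (4 * iB * V * V <= V / 200) by (assert (iB * V <= 1 / 800) by nra; nra).
    unfold Rdiv in *; lra.
  - assert (Hk : INR k <= INR m) by (apply le_INR; auto).
    assert (Up := nlik_upper k m u 0 (2 * P * (1 + s)) Hu0 k_le_m ltac:(apply pos_INR)
                   ltac:(lra) ltac:(lra) ltac:(lra) ltac:(nra)).
    assert (E1 : - 0 * (u * u) + 2 * P * (1 + s) * u = 4 * ((1 + s) * iB) * V)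
      by (rewrite Hu; unfold iB, V; field; repeat split; lra).
    rewrite E1 in Up.
    assert (4 * ((1 + s) * iB) * V <= V / 100) by nra.
    assert (exp (4 * ((1 + s) * iB) * V) <= 1 + 2 * (4 * ((1 + s) * iB) * V))
      by (apply exp_le_lin; split; [assert (0 <= (1 + s) * iB) by nra; nra | nra]).
    unfold Rdiv in *; lra.
Qed.

Lemma nlik_tiny (Q : R) : B <= Q -> Q <= P -> nlik k m (2 * / Q) <= exp (- (B / 2)).
Proof.
  intros HQ1 HQ2.
  set (iQ := / Q).
  assert (HiQ : 0 < iQ) by (apply Rinv_0_lt_compat; lra).
  assert (HQi : Q * iQ = 1) by (unfold iQ; field; lra).
  assert (HPQ : 1 <= P * iQ) by nra.
  assert (HiQ1 : iQ <= 1 / 800)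
    by (unfold iQ; apply Rle_trans with (/ 800); [apply Rinv_le_contravar | ]; lra).
  assert (Hk : INR k <= INR m) by (apply le_INR; auto).
  assert (HPs : P * (1 + s) <= B * P * P / 4) by nra.
  assert (HBP : B * P / 100 <= B * P * P / 4) by nra.
  assert (Up := nlik_upper k m (2 * iQ) (INR m / 4) (2 * P * (1 + s)) ltac:(lra) k_le_m
                 ltac:(lra) ltac:(lra) ltac:(nra) ltac:(lra) ltac:(nra)).
  eapply Rle_trans; [exact Up|]; apply exp_mono; rewrite m_eq.
  assert (A : 4 * P * (1 + s) * iQ <= B * (P * iQ) / 100)
    by (assert (4 * (1 + s) <= B / 100) by lra; assert (0 <= P * iQ) by nra; nra).
  replace (- (B * P * P / 4) * (2 * iQ * (2 * iQ)) + 2 * P * (1 + s) * (2 * iQ))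
    with (- (B * (P * iQ) * (P * iQ)) + 4 * P * (1 + s) * iQ) by (field; lra).
  set (w := P * iQ) in *.
  assert (B * w * (w - 1) >= 0) by (apply Rle_ge, Rmult_le_pos; nra).
  assert (B * (w - 1) >= 0) by (apply Rle_ge, Rmult_le_pos; nra).
  nra.
Qed.

End WeightEstimates.

Definition bayes_update (L : nat) (mu F : nat -> R) (l : nat) : R :=
  mu l * F l / rsum (fun i => mu i * F i) 1 L.

(* The common factor 2^{-m} of the likelihoods cancels in Bayes' rule. *)
Lemma posterior_as_update (L : nat) (B : R) (mu : nat -> R) (theta : list bool) (l : nat) :
  posterior L B mu theta l =
  bayes_update L mu (fun i => nlik (ones theta) (length theta) (2 * / B ^ i)) l.
Proof.
  unfold posterior, bayes_update.
  set (c := (/ 2) ^ length theta).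
  assert (Hc : 0 < c) by (apply pow_lt; lra).
  rewrite (rsum_ext _ (fun i => mu i * nlik (ones theta) (length theta) (2 * / B ^ i) * c))
    by (intros i _; rewrite lik_nlik; fold c; ring).
  rewrite rsum_scale, lik_nlik; fold c.
  set (W := rsum (fun i => mu i * nlik (ones theta) (length theta) (2 * / B ^ i)) 1 L).
  destruct (Req_dec W 0) as [HW|HW].
  - unfold Rdiv; rewrite HW, Rmult_0_l, !Rinv_0; ring.
  - field; lra.
Qed.

Lemma rsum_bayes_update (L : nat) (mu F : nat -> R) (a b : nat) :
  rsum (bayes_update L mu F) a b =
  rsum (fun l => mu l * F l) a b / rsum (fun i => mu i * F i) 1 L.
Proof. apply (rsum_scale (fun l => mu l * F l)). Qed.

Lemma bayes_update_dist (L : nat) (mu F : nat -> R) :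
  (forall l, (1 <= l <= L)%nat -> 0 <= mu l * F l) ->
  0 < rsum (fun i => mu i * F i) 1 L -> is_dist L (bayes_update L mu F).
Proof.
  intros Hpos HW; split.
  - intros l Hl; unfold bayes_update, Rdiv.
    apply Rmult_le_pos; [auto | left; apply Rinv_0_lt_compat; lra].
  - rewrite rsum_bayes_update; field; lra.
Qed.

Lemma class_ext (n : nat) (B rho : R) (L j : nat) (eta : R) (f g : nat -> R) :
  (forall l, f l = g l) ->
  is_dist L f /\ inDeta n B rho L j eta f -> is_dist L g /\ inDeta n B rho L j eta g.
Proof.
  intros Hfg [[Hnn Htot] [Hhead [lam [Hlam Hshape]]]].
  assert (Hsum : forall a b, rsum f a b = rsum g a b) by (intros; apply rsum_ext; auto).
  repeat split; try exists lam; try split; intros; rewrite <- ?Hsum, <- ?Hfg; auto;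
    apply Hshape; auto.
Qed.

Lemma near_one_product (c y a f e t : R) :
  0 < c -> c * (1 - a) <= y <= c * (1 + a) -> 1 - e <= f <= 1 + e ->
  0 <= a <= t / 4 -> 0 <= e <= t / 20 -> t <= 1 ->
  c * (1 - t / 2) <= y * f <= c * (1 + t / 2).
Proof.
  intros Hc Hy Hf Ha He Ht; assert (0 <= y) by nra; split.
  - assert (c * (1 - a) * (1 - e) <= y * f) by (apply Rmult_le_compat; nra); nra.
  - assert (y * f <= c * (1 + a) * (1 + e)) by (apply Rmult_le_compat; nra); nra.
Qed.

Section BayesStep.

Variables (n L j : nat) (B rho eta lam : R) (mu F : nat -> R).
Hypothesis j_pos : (1 <= j)%nat.
Hypothesis j_lt_L : (S j <= L)%nat.
Hypothesis n_ge2 : (2 <= n)%nat.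
Hypothesis B_large : 20000 <= B.
Hypothesis B_ge_ln : 36 * ln (INR n) <= B.
Hypothesis rho_ge2 : 2 <= rho.
Hypothesis rho_le_B : rho <= B.
Hypothesis eta_range : 0 <= eta <= rho ^ j / 2.
Hypothesis lam_pos : 0 < lam.
Hypothesis mu_nonneg : forall l, (1 <= l <= L)%nat -> 0 <= mu l.
Hypothesis mu_total : rsum mu 1 L = 1.
Hypothesis mu_head : (2 <= j)%nat -> rsum mu 1 (j - 1) <= / INR n ^ 9.
Hypothesis mu_shape : forall l, (j <= l <= L)%nat ->
  lam * / B ^ (2 * l) * (1 - / rho ^ l * eta) <= mu l /\
  mu l <= lam * / B ^ (2 * l) * (1 + / rho ^ l * eta).
Hypothesis F_nonneg : forall l, (1 <= l)%nat -> 0 <= F l.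
Hypothesis F_deep : forall l, (S j <= l)%nat ->
  1 - / B ^ (l - S j) / 20 <= F l <= 1 + / B ^ (l - S j) / 20.
Hypothesis F_shallow : forall l, (1 <= l <= j)%nat -> F l <= exp (- (B / 2)).

Lemma rel_error_decay (d : nat) : 0 <= / rho ^ (j + d) * eta <= / rho ^ d / 2.
Proof.
  assert (0 < rho ^ j) by (apply pow_lt; lra).
  assert (0 < rho ^ d) by (apply pow_lt; lra).
  assert (0 < / (rho ^ j * rho ^ d)) by (apply Rinv_0_lt_compat; nra).
  rewrite pow_add; split; [nra|].
  replace (/ rho ^ d / 2) with (/ (rho ^ j * rho ^ d) * (rho ^ j / 2)) by (field; lra).
  apply Rmult_le_compat_l; lra.
Qed.

Lemma level_ratio : mu j <= 2 * B ^ 2 * mu (S j).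
Proof.
  destruct (mu_shape j ltac:(lia)) as [_ Hj].
  destruct (mu_shape (S j) ltac:(lia)) as [HSj _].
  assert (E0 := rel_error_decay 0); assert (E1 := rel_error_decay 1).
  rewrite Nat.add_0_r, pow_O in E0; rewrite Nat.add_1_r, pow_1 in E1.
  assert (/ rho / 2 <= 1 / 4)
    by (assert (/ rho <= / 2) by (apply Rinv_le_contravar; lra); lra).
  set (c := lam * / B ^ (2 * j)) in *.
  assert (Hc : 0 < c) by (apply Rmult_lt_0_compat; [|apply Rinv_0_lt_compat, pow_lt]; lra).
  assert (HcS : lam * / B ^ (2 * S j) = c * / B ^ 2).
  { unfold c; replace (2 * S j)%nat with (2 * j + 2)%nat by lia.
    rewrite pow_add, Rinv_mult; ring. }
  rewrite HcS in HSj.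
  assert (HB2 : B ^ 2 * / B ^ 2 = 1) by (field; lra).
  assert (HSj' : c * (3 / 4) <= B ^ 2 * mu (S j)).
  { replace (c * (3 / 4)) with (B ^ 2 * (c * / B ^ 2 * (3 / 4))) by (field; lra).
    apply Rmult_le_compat_l; [nra|].
    assert (0 < c * / B ^ 2) by (apply Rmult_lt_0_compat; [|apply Rinv_0_lt_compat]; nra).
    nra. }
  nra.
Qed.

Lemma upper_mass : / (6 * B ^ 2) <= rsum mu (S j) L.
Proof.
  set (Sm := rsum mu (S j) L).
  assert (Htot : rsum mu 1 L = rsum mu 1 (j - 1) + mu j + Sm).
  { rewrite (rsum_split mu 1 j L), (rsum_split mu 1 (j - 1) j) by lia.
    replace (S (j - 1)) with j by lia; rewrite rsum_single; reflexivity. }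
  assert (Hhead : rsum mu 1 (j - 1) <= 1 / 2).
  { destruct (Nat.eq_dec j 1) as [->|Hj2]; [simpl; unfold rsum; simpl; lra|].
    assert (Hn : 2 <= INR n) by (apply le_INR in n_ge2; simpl in n_ge2; lra).
    assert (INR n <= INR n ^ 9)
      by (replace (INR n) with (INR n ^ 1) at 1 by ring; apply Rle_pow; lra || lia).
    eapply Rle_trans; [apply mu_head; lia|].
    replace (1 / 2) with (/ 2) by field; apply Rinv_le_contravar; lra. }
  assert (HmuSj : mu (S j) <= Sm).
  { unfold Sm; rewrite (rsum_split mu (S j) (S j) L), rsum_single by lia.
    assert (0 <= rsum mu (S (S j)) L) by (apply rsum_nonneg; intros; apply mu_nonneg; lia).
    lra. }
  assert (Hratio := level_ratio).
  assert (HB2 : 1 <= B ^ 2) by (apply pow_R1_Rle; lra).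
  assert (HSm : 0 <= Sm) by (apply rsum_nonneg; intros; apply mu_nonneg; lia).
  assert (B ^ 2 * mu (S j) <= B ^ 2 * Sm) by (apply Rmult_le_compat_l; lra).
  assert (Sm <= B ^ 2 * Sm) by nra.
  assert (Hgoal : 1 <= 6 * B ^ 2 * Sm) by lra.
  apply Rmult_le_reg_l with (6 * B ^ 2); [lra|].
  rewrite Rinv_r; lra.
Qed.

Let W := rsum (fun l => mu l * F l) 1 L.

Lemma normalizer_lower : rsum mu (S j) L * (19 / 20) <= W.
Proof.
  unfold W; rewrite (rsum_split _ 1 j L) by lia.
  assert (0 <= rsum (fun l => mu l * F l) 1 j)
    by (apply rsum_nonneg; intros; apply Rmult_le_pos; [apply mu_nonneg | apply F_nonneg]; lia).
  enough (rsum mu (S j) L * (19 / 20) <= rsum (fun l => mu l * F l) (S j) L) by lra.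
  rewrite <- rsum_scale; apply rsum_le; intros l Hl.
  apply Rmult_le_compat_l; [apply mu_nonneg; lia|].
  destruct (F_deep l ltac:(lia)) as [HF _].
  assert (/ B ^ (l - S j) <= 1)
    by (rewrite <- Rinv_1; apply Rinv_le_contravar; [lra | apply pow_R1_Rle; lra]).
  lra.
Qed.

Lemma normalizer_pos : 0 < W.
Proof.
  assert (0 < / (6 * B ^ 2)) by (apply Rinv_0_lt_compat; nra).
  assert (H1 := upper_mass); assert (H2 := normalizer_lower); lra.
Qed.

Lemma shallow_mass : rsum (fun l => mu l * F l) 1 j <= exp (- (B / 2)).
Proof.
  assert (He := exp_pos (- (B / 2))).
  apply Rle_trans with (rsum (fun l => mu l * exp (- (B / 2))) 1 j).
  { apply rsum_le; intros l Hl.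
    apply Rmult_le_compat_l; [apply mu_nonneg; lia | apply F_shallow; lia]. }
  rewrite rsum_scale.
  assert (rsum mu 1 j <= 1).
  { rewrite <- mu_total, (rsum_split mu 1 j L) by lia.
    assert (0 <= rsum mu (S j) L) by (apply rsum_nonneg; intros; apply mu_nonneg; lia).
    lra. }
  nra.
Qed.

Lemma update_shallow : rsum (bayes_update L mu F) 1 j <= / INR n ^ 9.
Proof.
  rewrite rsum_bayes_update; fold W.
  assert (Hn : 0 < INR n) by (apply lt_0_INR; lia).
  assert (Hdom := exp_half_dominates (INR n) B Hn B_large B_ge_ln).
  assert (Hn9 : 0 < INR n ^ 9) by (apply pow_lt; lra).
  assert (HW := normalizer_pos).
  assert (HWlow : / (6 * B ^ 2) * (19 / 20) <= W)
    by (assert (H := normalizer_lower); assert (H' := upper_mass); lra).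
  assert (Hexp : exp (- (B / 2)) * exp (B / 2) = 1)
    by (rewrite <- exp_plus; replace (- (B / 2) + B / 2) with 0 by ring; apply exp_0).
  assert (He := exp_pos (B / 2)).
  assert (Hhead := shallow_mass).
  assert (HB2 : 0 < B ^ 2) by (apply pow_lt; lra).
  assert (HWB : 1 <= W * (8 * B ^ 2)).
  { replace 1 with (/ (6 * B ^ 2) * (19 / 20) * (120 / 19 * B ^ 2)) by (field; lra). nra. }
  apply Rmult_le_reg_l with (INR n ^ 9 * W); [nra|].
  rewrite Rinv_r_simpl_m by lra.
  unfold Rdiv; replace (INR n ^ 9 * W * (rsum (fun l => mu l * F l) 1 j * / W))
    with (INR n ^ 9 * rsum (fun l => mu l * F l) 1 j) by (field; lra).
  set (e := exp (- (B / 2))) in *.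
  assert (He0 : 0 < e) by apply exp_pos.
  assert (INR n ^ 9 * rsum (fun l => mu l * F l) 1 j <= INR n ^ 9 * e)
    by (apply Rmult_le_compat_l; lra).
  assert (INR n ^ 9 * e * (8 * B ^ 2) <= W * (8 * B ^ 2)).
  { replace (INR n ^ 9 * e * (8 * B ^ 2)) with (e * (8 * B ^ 2 * INR n ^ 9)) by ring.
    assert (e * (8 * B ^ 2 * INR n ^ 9) <= e * exp (B / 2))
      by (apply Rmult_le_compat_l; lra).
    lra. }
  assert (INR n ^ 9 * e <= W) by (apply Rmult_le_reg_r with (8 * B ^ 2); lra).
  lra.
Qed.

(* Condition (ii) of D_{j+1} with normalization lam / W and relative error
   rho^{j+1-l}/2: the prior's error and the weight's error compose. *)
Lemma update_deep (l : nat) : (S j <= l <= L)%nat ->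
  lam / W * / B ^ (2 * l) * (1 - / rho ^ l * (rho ^ S j / 2)) <= bayes_update L mu F l /\
  bayes_update L mu F l <= lam / W * / B ^ (2 * l) * (1 + / rho ^ l * (rho ^ S j / 2)).
Proof.
  intros Hl.
  set (d := (l - S j)%nat).
  assert (Hld : l = (j + S d)%nat) by (unfold d; lia).
  assert (Hrd : 0 < rho ^ d) by (apply pow_lt; lra).
  assert (HBd : rho ^ d <= B ^ d) by (apply pow_incr; lra).
  set (t := / rho ^ d).
  assert (Ht : / rho ^ l * (rho ^ S j / 2) = t / 2).
  { unfold t; rewrite Hld, pow_add; simpl pow.
    assert (0 < rho ^ j) by (apply pow_lt; lra); field; lra. }
  assert (Ht1 : 0 <= t <= 1).
  { unfold t; split; [left; apply Rinv_0_lt_compat; lra|].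
    rewrite <- Rinv_1; apply Rinv_le_contravar; [lra | apply pow_R1_Rle; lra]. }
  assert (Ha : 0 <= / rho ^ l * eta <= t / 4).
  { rewrite Hld; destruct (rel_error_decay (S d)) as [A1 A2]; split; auto.
    simpl pow in A2; apply Rle_trans with (/ (rho * rho ^ d) / 2); auto.
    unfold t; rewrite Rinv_mult.
    assert (/ rho <= / 2) by (apply Rinv_le_contravar; lra).
    assert (0 < / rho ^ d) by (apply Rinv_0_lt_compat; lra); nra. }
  assert (He : 0 <= / B ^ d / 20 <= t / 20).
  { assert (0 < / B ^ d) by (apply Rinv_0_lt_compat, pow_lt; lra).
    split; [lra|]; apply Rmult_le_compat_r; [lra | apply Rinv_le_contravar; lra]. }
  set (c := lam * / B ^ (2 * l)).
  assert (Hc : 0 < c) by (apply Rmult_lt_0_compat; [|apply Rinv_0_lt_compat, pow_lt]; lra).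
  destruct (near_one_product c (mu l) (/ rho ^ l * eta) (F l) (/ B ^ d / 20) t Hc
              (mu_shape l ltac:(lia)) (F_deep l ltac:(lia)) Ha He ltac:(lra)) as [G1 G2].
  rewrite Ht; unfold bayes_update; fold W.
  assert (HW := normalizer_pos).
  replace (lam / W * / B ^ (2 * l) * (1 - t / 2)) with (c * (1 - t / 2) * / W)
    by (unfold c, Rdiv; ring).
  replace (lam / W * / B ^ (2 * l) * (1 + t / 2)) with (c * (1 + t / 2) * / W)
    by (unfold c, Rdiv; ring).
  assert (0 <= / W) by (left; apply Rinv_0_lt_compat; lra).
  unfold Rdiv; split; apply Rmult_le_compat_r; lra.
Qed.

Lemma bayes_update_next_class :
  is_dist L (bayes_update L mu F) /\
  inDeta n B rho L (S j) (rho ^ S j / 2) (bayes_update L mu F).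
Proof.
  split; [|split].
  - apply bayes_update_dist; [|apply normalizer_pos].
    intros l Hl; apply Rmult_le_pos; [apply mu_nonneg | apply F_nonneg]; lia.
  - intros _; replace (S j - 1)%nat with j by lia; apply update_shallow.
  - exists (lam / W); split; [apply Rdiv_lt_0_compat; [lra | apply normalizer_pos]|].
    exact update_deep.
Qed.

End BayesStep.

Lemma level_weights (k m j : nat) (B s : R) :
  (k <= m)%nat -> 800 <= B -> 400 * (1 + s) <= B -> 0 <= s ->
  INR m = B * B ^ j * B ^ j ->
  INR m / 2 - B ^ j * (1 + s) <= INR k <= INR m / 2 + B * B ^ j / 100 ->
  (forall l, (1 <= l)%nat -> 0 <= nlik k m (2 * / B ^ l)) /\
  (forall l, (S j <= l)%nat ->
     1 - / B ^ (l - S j) / 20 <= nlik k m (2 * / B ^ l) <= 1 + / B ^ (l - S j) / 20) /\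
  (forall l, (1 <= l <= j)%nat -> nlik k m (2 * / B ^ l) <= exp (- (B / 2))).
Proof.
  intros Hkm HB Hs Hs0 Hm [Hk1 Hk2].
  assert (HP : 1 <= B ^ j) by (apply pow_R1_Rle; lra).
  assert (HBl : forall l, (1 <= l)%nat -> B <= B ^ l)
    by (intros l Hl; rewrite <- pow_1 at 1; apply Rle_pow; lra || lia).
  split; [|split].
  - intros l Hl; apply nlik_nonneg.
    assert (Hl' := HBl l Hl).
    assert (0 < / B ^ l) by (apply Rinv_0_lt_compat; lra).
    assert (/ B ^ l <= / 800) by (apply Rinv_le_contravar; lra); lra.
  - intros l Hl.
    replace (B ^ l) with (B * B ^ j * B ^ (l - S j))
      by (rewrite Rmult_assoc, <- pow_add, <- (pow_1 B) at 1; rewrite <- pow_add;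
          f_equal; lia).
    apply nlik_near_one with s; auto; apply pow_R1_Rle; lra.
  - intros l Hl; apply nlik_tiny with (B ^ j) s; auto;
      [apply HBl | apply Rle_pow]; lra || lia.
Qed.

Lemma lnn_ge6 (n : nat) : (729 <= n)%nat -> 6 <= lnn n.
Proof.
  intros Hn; unfold lnn.
  assert (E : exp 6 <= INR n).
  { replace 6 with (INR 6 * 1) by (simpl; ring); rewrite exp_nat_mult.
    apply Rle_trans with (3 ^ 6).
    - apply pow_incr; split; [left; apply exp_pos | apply exp_le_3].
    - apply le_INR in Hn; simpl in Hn |- *; lra. }
  destruct (Rle_or_lt 6 (ln (INR n))) as [H|H]; auto.
  apply exp_increasing in H; rewrite exp_ln in H; [lra|].
  assert (0 < exp 6) by apply exp_pos; lra.
Qed.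

Lemma parameters_large (n : nat) (alpha : R) : (729 <= n)%nat -> 1 <= alpha ->
  2 <= rhopar n /\ rhopar n <= Bpar n alpha /\ 20000 <= Bpar n alpha /\
  36 * ln (INR n) <= Bpar n alpha /\
  400 * (1 + sqrt (10 * gam n alpha * lnn n)) <= Bpar n alpha.
Proof.
  intros Hn Halpha.
  assert (HL := lnn_ge6 n Hn).
  unfold rhopar, Bpar, gam; fold (lnn n); set (Ln := lnn n) in *.
  assert (H9 : 6 ^ 9 <= Ln ^ 9) by (apply pow_incr; lra).
  assert (H3 : 6 ^ 3 <= Ln ^ 3) by (apply pow_incr; lra).
  assert (H7 : 1 <= Ln ^ 7) by (apply pow_R1_Rle; lra).
  assert (HBL : Ln ^ 10 <= alpha * Ln ^ 10)
    by (assert (0 <= Ln ^ 10) by (apply pow_le; lra); nra).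
  assert (HB : 10077696 * Ln <= alpha * Ln ^ 10)
    by (replace (Ln ^ 10) with (Ln ^ 9 * Ln) in HBL by ring; simpl in H9; nra).
  assert (Hs : sqrt (10 * (alpha * Ln ^ 10) * Ln) <= alpha * Ln ^ 10 / 800).
  { rewrite <- (sqrt_square (alpha * Ln ^ 10 / 800)) by lra.
    apply sqrt_le_1_alt; set (X := alpha * Ln ^ 10) in *.
    assert (X * (6400000 * Ln) <= X * X) by (apply Rmult_le_compat_l; lra).
    replace (X / 800 * (X / 800)) with (X * X / 640000) by field; lra. }
  assert (Ln ^ 3 <= Ln ^ 10)
    by (replace (Ln ^ 10) with (Ln ^ 3 * Ln ^ 7) by ring; nra).
  repeat split; simpl in H3; lra.
Qed.

Lemma zeta_window (n : nat) (alpha : R) (j : nat) : 0 < Bpar n alpha ->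
  let B := Bpar n alpha in
  zeta1 n alpha j = B * B ^ j * B ^ j / 2 - B ^ j * (1 + sqrt (10 * gam n alpha * lnn n)) /\
  zeta3 n alpha j = B * B ^ j * B ^ j / 2 + B * B ^ j / 100.
Proof.
  intros HB B; unfold zeta1, zeta3; fold B in HB |- *; change (gam n alpha) with B.
  assert (0 < B ^ j) by (apply pow_lt; lra).
  replace (2 * j)%nat with (j + j)%nat by lia.
  rewrite pow_add; simpl pow; split; field; lra.
Qed.

Theorem mainTheorem2 :
  exists N : nat, forall n : nat, (N <= n)%nat ->
  forall alpha : R, 1 <= alpha <= Rpower (INR n) (1/5) ->
  forall L j : nat, (2 <= L)%nat -> (1 <= j <= L - 1)%nat ->
  forall mu : nat -> R,
    is_dist L mu -> inD n (Bpar n alpha) (rhopar n) L j mu ->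
  forall m : nat, INR m = gam n alpha * Bpar n alpha ^ (2 * j) ->
  forall theta : list bool, length theta = m ->
    zeta1 n alpha j <= INR (ones theta) <= zeta3 n alpha j ->
    is_dist L (posterior L (Bpar n alpha) mu theta) /\
    inD n (Bpar n alpha) (rhopar n) L (S j) (posterior L (Bpar n alpha) mu theta).
Proof.
  exists 729%nat.
  intros n Hn alpha Halpha L j HL Hj mu [mu_nonneg mu_total] Hprior m Hm theta Hlen Hones.
  destruct (parameters_large n alpha Hn (proj1 Halpha)) as (Hrho & HrhoB & HB & HBln & Hs).
  destruct (zeta_window n alpha j ltac:(lra)) as [Hz1 Hz3].
  rewrite Hz1, Hz3 in Hones.
  set (B := Bpar n alpha) in *; set (s := sqrt (10 * gam n alpha * lnn n)) in *.
  assert (Hm' : INR m = B * B ^ j * B ^ j)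
    by (rewrite Hm; change (gam n alpha) with B; replace (2 * j)%nat with (j + j)%nat by lia;
        rewrite pow_add; ring).
  rewrite <- Hm' in Hones.
  assert (Hkm : (ones theta <= m)%nat) by (rewrite <- Hlen; apply ones_le_length).
  destruct (level_weights (ones theta) m j B s Hkm ltac:(lra) Hs (sqrt_pos _) Hm' Hones)
    as (F_nonneg & F_deep & F_shallow).
  unfold inD in Hprior |- *; destruct Hprior as [mu_head [lam [Hlam mu_shape]]].
  replace (Nat.eqb (S j) 1) with false by (destruct j; [lia | reflexivity]).
  apply (class_ext _ _ _ _ _ _ (bayes_update L mu (fun i => nlik (ones theta) m (2 * / B ^ i)))).
  { intros l; rewrite posterior_as_update, Hlen; reflexivity. }
  apply (bayes_update_next_class n L j B (rhopar n) (if Nat.eqb j 1 then 0 else rhopar n ^ j / 2) lam);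
    auto; try lia.
  assert (0 < rhopar n ^ j) by (apply pow_lt; lra).
  destruct (Nat.eqb j 1); lra.
Qed.
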